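(* For $c=(c_3,c_4)\in\mathbb{C}^2$ let $R_c=\{(c_1,c_2)\in\mathbb{C}^2: 2c_4c_1^2+2c_1=c_2^2+2ic_3c_2\}\setminus\{(0,0),(0,-2ic_3)\}$. On $R_c$ consider the meromorphic $1$-forms \[\alpha=\Big(\frac{i}{c_1}-\frac{c_3}{c_1(c_2+ic_3)}\Big)dc_1,\qquad \omega_2=\frac{c_1}{c_2+ic_3}\,dc_1,\] and regard their periods over cycles $\gamma$ on $R_c$ as analytic functions of $c$. Then there is a loop $\Gamma$ in $\mathbb{C}^2\setminus\{(c_3,0):c_3\in\mathbb{C}\}$ (and a cycle $\gamma$ on $R_c$, transported continuously along $\Gamma$) such that after analytic continuation along one circuit of $\Gamma$, the period $\int_\gamma\alpha$ turns into $-4\pi-\int_\gamma\alpha$ and the period $\int_\gamma\omega_2$ changes sign.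
   Context: The curve $R_c$ is the reduced level set of the complexified planar Kepler problem: $c_1$ plays the role of a holomorphic square root of $x_1^2+x_2^2$, $c_3$ is the angular momentum and $c_4$ the energy, and $\omega_2$ together with $\alpha$ arise as the coefficients of $dc_4$ and (part of) the coefficient of $dc_3$ in the holomorphic symplectic form. On the line $c_4=0$ the curve $2c_4c_1^2+2c_1=c_2^2+2ic_3c_2$ degenerates (it is homeomorphic to $\mathbb{C}$ rather than $\mathbb{C}^*$). *)

From Stdlib Require Import Reals.
From Coquelicot Require Import Coquelicot.

Open Scope C_scope.

Definition Ci : C := (0%R, 1%R).

Definition in_Rc (c3 c4 c1 c2 : C) : Prop :=
  2 * c4 * (c1 * c1) + 2 * c1 = c2 * c2 + 2 * Ci * c3 * c2
  /\ ~ (c1 = RtoC 0 /\ c2 = RtoC 0)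
  /\ ~ (c1 = RtoC 0 /\ c2 = - (2 * Ci * c3)).

Definition alpha_coef (c3 c1 c2 : C) : C :=
  Ci / c1 - c3 / (c1 * (c2 + Ci * c3)).

Definition omega2_coef (c3 c1 c2 : C) : C :=
  c1 / (c2 + Ci * c3).

Definition line_integral (f : C -> C -> C) (g1 g2 : R -> C) (v : C) : Prop :=
  exists d1 : R -> C,
    (forall t : R, is_derive g1 t (d1 t)) /\
    is_RInt (fun t : R => f (g1 t) (g2 t) * d1 t) 0%R 1%R v.

(* Along the loop c3 = 0, c4 = e^{2 pi i s}/2 around the line c4 = 0 write 2 c4 = 1/v^2.
   Completing the square turns R_c into the conic ((c1 + v^2)/v)^2 - (c2 + i c3)^2 = c3^2 + v^2,
   which w |-> (param1, param2) parametrizes rationally; the unit circle |w| = 1 gives a cycle.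
   On it omega_2 pulls back to 2 pi i v^3 dt plus an exact Laurent term, so its period is
   2 pi i v^3, while alpha pulls back to (2 pi - 4 pi / (1 - b e^{-2 pi i t})) dt with |b| < 1,
   so its period is -2 pi, the fixed point of P |-> -4 pi - P.  Continuing v = (2 c4)^{-1/2}
   once around the loop yields -v, so the period of omega_2 changes sign.  All of this holds
   uniformly for base points within 1/10 of (0, 1/2). *)

From Stdlib Require Import Reals Lra.
From Coquelicot Require Import Coquelicot.

Open Scope C_scope.

Section ComplexContinuity.

Context {U : UniformSpace}.

Lemma continuous_fst_comp {V W : UniformSpace} (f : U -> V * W) x :
  continuous f x -> continuous (fun y => fst (f y)) x.
Proof.
  intros Hf; apply (continuous_comp f fst); auto.
  destruct (f x); apply continuous_fst.
Qed.

Lemma continuous_snd_comp {V W : UniformSpace} (f : U -> V * W) x :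
  continuous f x -> continuous (fun y => snd (f y)) x.
Proof.
  intros Hf; apply (continuous_comp f snd); auto.
  destruct (f x); apply continuous_snd.
Qed.

Lemma continuous_Rmult (f g : U -> R) x :
  continuous f x -> continuous g x -> continuous (fun y => f y * g y)%R x.
Proof. exact (@continuous_mult U R_AbsRing f g x). Qed.

Lemma continuous_Rplus (f g : U -> R) x :
  continuous f x -> continuous g x -> continuous (fun y => f y + g y)%R x.
Proof. exact (@continuous_plus U R_AbsRing R_NormedModule f g x). Qed.

Lemma continuous_Ropp (f : U -> R) x :
  continuous f x -> continuous (fun y => - f y)%R x.
Proof. exact (@continuous_opp U R_AbsRing R_NormedModule f x). Qed.

Lemma continuous_Cpair (f g : U -> R) x :
  continuous f x -> continuous g x -> continuous (fun y => (f y, g y) : C) x.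
Proof.
  intros Hf Hg; apply (continuous_comp_2 f g (fun a b => (a, b) : C)); auto.
  eapply continuous_ext; [|apply continuous_id].
  intros [a b]; reflexivity.
Qed.

Lemma continuous_Cplus (f g : U -> C) x :
  continuous f x -> continuous g x -> continuous (fun y => f y + g y) x.
Proof. exact (@continuous_plus U R_AbsRing C_R_NormedModule f g x). Qed.

Lemma continuous_Cminus (f g : U -> C) x :
  continuous f x -> continuous g x -> continuous (fun y => f y - g y) x.
Proof. exact (@continuous_minus U R_AbsRing C_R_NormedModule f g x). Qed.

Lemma continuous_Cmult (f g : U -> C) x :
  continuous f x -> continuous g x -> continuous (fun y => f y * g y) x.
Proof.
  intros Hf Hg.
  apply (continuous_ext (fun y => (fst (f y) * fst (g y) - snd (f y) * snd (g y),
                                   fst (f y) * snd (g y) + snd (f y) * fst (g y))%R : C)).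
  { intros y; destruct (f y), (g y); reflexivity. }
  apply continuous_Cpair; [apply continuous_Rplus; [|apply continuous_Ropp]|apply continuous_Rplus];
    apply continuous_Rmult; auto using continuous_fst_comp, continuous_snd_comp.
Qed.

Lemma continuous_Cnorm2 (f : U -> C) x :
  continuous f x -> continuous (fun y => fst (f y) ^ 2 + snd (f y) ^ 2)%R x.
Proof.
  intros Hf; apply continuous_Rplus; simpl; apply continuous_Rmult;
    auto using continuous_fst_comp, continuous_snd_comp, continuous_Rmult, continuous_const.
Qed.

Lemma continuous_Cmod (f : U -> C) x :
  continuous f x -> continuous (fun y => Cmod (f y)) x.
Proof.
  intros Hf; apply (continuous_comp _ sqrt); auto using continuous_Cnorm2, continuous_sqrt.
Qed.

Lemma continuous_Cinv (f : U -> C) x :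
  continuous f x -> f x <> 0 -> continuous (fun y => / f y) x.
Proof.
  intros Hf Hfx.
  pose proof (continuous_Cnorm2 f x Hf) as Hsq.
  assert (Hsq0 : (fst (f x) ^ 2 + snd (f x) ^ 2 <> 0)%R).
  { intros H0; apply Hfx; destruct (f x) as [a b]; simpl in H0.
    apply injective_projections; simpl; nra. }
  assert (Hinv : continuous (fun y => / (fst (f y) ^ 2 + snd (f y) ^ 2))%R x).
  { apply (continuous_comp _ Rinv); auto using continuous_Rinv. }
  unfold Cinv; apply continuous_Cpair; unfold Rdiv; apply continuous_Rmult;
    auto using continuous_fst_comp, continuous_Ropp, continuous_snd_comp.
Qed.

Lemma continuous_Cdiv (f g : U -> C) x :
  continuous f x -> continuous g x -> g x <> 0 -> continuous (fun y => f y / g y) x.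
Proof. intros Hf Hg Hgx; apply continuous_Cmult; auto using continuous_Cinv. Qed.

End ComplexContinuity.

Lemma Cmod_2 : Cmod 2 = 2%R.
Proof. rewrite Cmod_R; apply Rabs_right; lra. Qed.

Lemma Cdiv_neq0 (x y : C) : x <> 0 -> y <> 0 -> x / y <> 0.
Proof.
  intros Hx Hy H; apply Hx.
  replace x with (x / y * y) by (field; auto).
  rewrite H; ring.
Qed.

Lemma Cneq_of_Cmod_lt (z p : C) : (Cmod p < Cmod z)%R -> z <> p.
Proof. intros H H0; subst; lra. Qed.

Lemma Ci_sqr : Ci * Ci = -1.
Proof. apply injective_projections; simpl; ring. Qed.

Definition cis (a : R) : C := (cos a, sin a).

Lemma cis_add a b : cis a * cis b = cis (a + b).
Proof.
  unfold cis; rewrite cos_plus, sin_plus.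
  apply injective_projections; simpl; ring.
Qed.

Lemma cis_0 : cis 0 = 1.
Proof. unfold cis; rewrite cos_0, sin_0; reflexivity. Qed.

Lemma cis_PI : cis PI = -1.
Proof. unfold cis; rewrite cos_PI, sin_PI; apply injective_projections; simpl; ring. Qed.

Lemma cis_2PI : cis (2 * PI) = 1.
Proof. unfold cis; rewrite cos_2PI, sin_2PI; reflexivity. Qed.

Lemma Cmod_cis a : Cmod (cis a) = 1%R.
Proof.
  unfold Cmod, cis; simpl.
  transitivity (sqrt 1); [f_equal|apply sqrt_1].
  pose proof (sin2_cos2 a) as H; unfold Rsqr in H; lra.
Qed.

Lemma cis_neq0 a : cis a <> 0.
Proof. intros H; pose proof (Cmod_cis a) as Hm; rewrite H, Cmod_0 in Hm; lra. Qed.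

Lemma cis_opp a : cis (- a) = / cis a.
Proof.
  pose proof (cis_add a (- a)) as H; rewrite Rplus_opp_r, cis_0 in H.
  rewrite <- (Cmult_1_r (/ cis a)), <- H.
  field; apply cis_neq0.
Qed.

Lemma continuous_cis {U : UniformSpace} (f : U -> R) x :
  continuous f x -> continuous (fun y => cis (f y)) x.
Proof.
  intros Hf; apply continuous_Cpair.
  - apply (continuous_comp f cos); auto using continuous_cos.
  - apply (continuous_comp f sin); auto using continuous_sin.
Qed.

Ltac solve_continuous :=
  repeat match goal with
  | |- continuous (fun _ => ?c) _ => apply continuous_const
  | |- continuous (fun _ => Cplus _ _) _ => apply continuous_Cplus
  | |- continuous (fun _ => Cminus _ _) _ => apply continuous_Cminus
  | |- continuous (fun _ => Cmult _ _) _ => apply continuous_Cmult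
  | |- continuous (fun _ => Cdiv _ _) _ => apply continuous_Cdiv
  | |- continuous (fun _ => cis _) _ => apply continuous_cis
  | |- continuous (fun _ => Rmult _ _) _ => apply continuous_Rmult
  | |- continuous (Rmult ?a) _ => apply (continuous_Rmult (fun _ => a) (fun y => y))
  | |- continuous (fun _ => Ropp _) _ => apply continuous_Ropp
  | |- continuous (fun y => y) _ => apply continuous_id
  | |- continuous _ _ => assumption
  end.

Lemma is_derive_Cpair (f g : R -> R) (x f' g' : R) :
  is_derive f x f' -> is_derive g x g' ->
  is_derive (fun t => (f t, g t) : C) x ((f', g') : C).
Proof.
  intros Hf Hg; unfold is_derive in *.
  apply (@filterdiff_comp'_2 R_AbsRing R_NormedModule R_NormedModule R_NormedModule
     C_R_NormedModule f g (fun a b => (a, b)) x _ _ (fun a b => (a, b)) Hf Hg).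
  eapply filterdiff_ext_lin.
  - eapply filterdiff_ext; [|apply filterdiff_id].
    intros [a b]; reflexivity.
  - intros [a b]; reflexivity.
Qed.

Lemma is_derive_laurent (A B C0 : C) (t : R) :
  is_derive (fun u => A * cis (2 * PI * u) + B * cis (- (2 * PI * u)) + C0) t
            (2 * PI * Ci * (A * cis (2 * PI * t) - B * cis (- (2 * PI * t)))).
Proof.
  destruct A as [a1 a2], B as [b1 b2], C0 as [c1 c2].
  unfold cis, Cmult, Cplus, Cminus, Copp, Ci, RtoC; simpl.
  apply (is_derive_Cpair (fun u => _) (fun u => _)); auto_derive; auto; ring.
Qed.

Lemma is_RInt_laurent_derivative (A B : C) :
  is_RInt (fun t => 2 * PI * Ci * (A * cis (2 * PI * t) - B * cis (- (2 * PI * t))))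
    0 1 (RtoC 0).
Proof.
  set (F u := A * cis (2 * PI * u) + B * cis (- (2 * PI * u)) + RtoC 0).
  assert (HF : minus (F 1%R) (F 0%R) = RtoC 0).
  { replace (F 1%R) with (F 0%R); [exact (@minus_eq_zero C_AbelianGroup (F 0%R))|].
    unfold F; rewrite Rmult_1_r, Rmult_0_r, Ropp_0, cis_opp, cis_2PI, cis_0; field. }
  rewrite <- HF; apply (@is_RInt_derive C_R_CompleteNormedModule);
    intros x _; [apply is_derive_laurent|solve_continuous].
Qed.

Lemma is_RInt_laurent_derivative_plus_const (A B D : C) :
  is_RInt (fun t => 2 * PI * Ci * (A * cis (2 * PI * t) - B * cis (- (2 * PI * t))) + D)
    0 1 D.
Proof.
  pose proof (is_RInt_plus _ _ _ _ _ _ (is_RInt_laurent_derivative A B) (is_RInt_const 0 1 D))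
    as H.
  match type of H with is_RInt _ _ _ ?v => replace v with D in H end; [exact H|].
  rewrite scal_R_Cmult, Rminus_0_r, Cmult_1_l; change (D = RtoC 0 + D); ring.
Qed.

Lemma cos_sin_combination_lt_1 (b1 b2 a : R) :
  (Cmod (b1, b2) < 1)%R -> (b1 * cos a + b2 * sin a < 1)%R.
Proof.
  intros Hb.
  assert (Hb2 : (b1 * b1 + b2 * b2 < 1)%R).
  { assert (H : (Cmod (b1, b2) ^ 2 < 1)%R) by (pose proof (Cmod_ge_0 (b1, b2)); nra).
    rewrite Cmod2_alt in H; unfold Re, Im in H; simpl in H; lra. }
  pose proof (sin2_cos2 a) as H; unfold Rsqr in H.
  assert (Hcs : ((b1 * cos a + b2 * sin a) ^ 2 + (b1 * sin a - b2 * cos a) ^ 2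
                 = (b1 * b1 + b2 * b2) * (sin a * sin a + cos a * cos a))%R) by ring.
  rewrite H, Rmult_1_r in Hcs.
  assert (Hu : ((b1 * cos a + b2 * sin a) ^ 2 < 1)%R)
    by (pose proof (pow2_ge_0 (b1 * sin a - b2 * cos a)); lra).
  nra.
Qed.

Lemma is_RInt_inv_1_minus_cis (b : C) : (Cmod b < 1)%R ->
  is_RInt (fun t => / (1 - b * cis (- (2 * PI * t)))) 0 1 (RtoC 1).
Proof.
  destruct b as [b1 b2]; intros Hb.
  set (y1 t := (1 - (b1 * cos (2 * PI * t) + b2 * sin (2 * PI * t)))%R).
  set (y2 t := (b1 * sin (2 * PI * t) - b2 * cos (2 * PI * t))%R).
  assert (Hy1 : forall t, (0 < y1 t)%R).
  { intros t; pose proof (cos_sin_combination_lt_1 b1 b2 (2 * PI * t) Hb); unfold y1; lra. }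
  assert (HN : forall t, (0 < y1 t * y1 t + y2 t * y2 t)%R).
  { intros t; specialize (Hy1 t); nra. }
  (* F = t - i Log (1 - b e^{-2 pi i t}) / (2 pi); the principal argument is atan (y2 / y1)
     because 1 - b e^{-2 pi i t} = y1 + i y2 stays in the right half plane. *)
  set (F t := ((t + atan (y2 t / y1 t) / (2 * PI))%R,
               (- ln (y1 t * y1 t + y2 t * y2 t) / (4 * PI))%R) : C).
  set (dF t := (y1 t / (y1 t * y1 t + y2 t * y2 t),
                - y2 t / (y1 t * y1 t + y2 t * y2 t))%R : C).
  assert (HF : forall t, is_derive F t (dF t)).
  { intros t; specialize (Hy1 t); specialize (HN t); pose proof PI_RGT_0.
    apply is_derive_Cpair; unfold y1, y2 in *; auto_derive.
    all: set (c := cos (2 * PI * t)) in *; set (s := sin (2 * PI * t)) in *.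
    all: try lra.
    all: field; repeat split; try lra; nra. }
  assert (HdF : forall t, continuous dF t).
  { intros t; specialize (Hy1 t); specialize (HN t).
    unfold dF; apply continuous_Cpair; apply (ex_derive_continuous (V := R_NormedModule));
      unfold y1, y2 in *; auto_derive; lra. }
  pose proof (@is_RInt_derive C_R_CompleteNormedModule F dF 0 1
                (fun t _ => HF t) (fun t _ => HdF t)) as H.
  match type of H with is_RInt _ _ _ ?v => replace v with (RtoC 1) in H end.
  2:{ unfold F, y1, y2, minus, plus, opp; simpl.
      rewrite !Rmult_1_r, !Rmult_0_r, cos_2PI, sin_2PI, cos_0, sin_0.
      unfold prod_plus, prod_opp, plus, opp; simpl.
      apply injective_projections; simpl; ring. }
  eapply is_RInt_ext; [|exact H].
  intros t _; specialize (Hy1 t); specialize (HN t).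
  unfold dF, y1, y2, cis in *; rewrite cos_neg, sin_neg.
  set (c := cos (2 * PI * t)) in *; set (s := sin (2 * PI * t)) in *.
  unfold RtoC, Cinv, Cminus, Cplus, Cmult, Copp; simpl.
  apply injective_projections; simpl; field; nra.
Qed.

Lemma is_RInt_alpha_pullback (b : C) : (Cmod b < 1)%R ->
  is_RInt (fun t => 2 * PI - 4 * PI / (1 - b * cis (- (2 * PI * t)))) 0 1 (RtoC (-2 * PI)).
Proof.
  intros Hb.
  pose proof (is_RInt_minus _ _ _ _ _ _ (is_RInt_const 0 1 (RtoC (2 * PI)))
                (is_RInt_scal _ _ _ (4 * PI)%R _ (is_RInt_inv_1_minus_cis b Hb))) as H.
  match type of H with is_RInt _ _ _ ?v => replace v with (RtoC (-2 * PI)) in H end.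
  - eapply is_RInt_ext; [|exact H].
    intros t _; cbv beta; rewrite scal_R_Cmult, !RtoC_mult; reflexivity.
  - rewrite !scal_R_Cmult; change (minus ?a ?b) with (Cminus a b).
    apply injective_projections; simpl; ring.
Qed.

(* With K = c3^2 + v^2 these solve (c1 + v^2)/v - (c2 + i c3) = 2 w and
   (c1 + v^2)/v + (c2 + i c3) = K / (2 w). *)
Definition param1 (c3 v w : C) : C := v * w + v * (c3 * c3 + v * v) / 4 / w - v * v.
Definition param2 (c3 v w : C) : C := (c3 * c3 + v * v) / 4 / w - w - Ci * c3.
Definition dparam1 (c3 v w : C) : C := 2 * PI * Ci * (v * w - v * (c3 * c3 + v * v) / 4 / w).

Section ConicParametrization.

Variables c3 v w : C.
Hypothesis v_neq0 : v <> 0.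
Hypothesis w_neq0 : w <> 0.

Lemma param_on_conic (c4 : C) : 2 * c4 * (v * v) = 1 ->
  2 * c4 * (param1 c3 v w * param1 c3 v w) + 2 * param1 c3 v w
  = param2 c3 v w * param2 c3 v w + 2 * Ci * c3 * param2 c3 v w.
Proof.
  intros Hc4.
  assert (Hc : c4 = / (2 * (v * v))).
  { rewrite <- (Cmult_1_l (/ _)), <- Hc4; field; auto. }
  rewrite Hc; unfold param1, param2; field [Ci_sqr]; auto.
Qed.

Lemma param1_factor :
  param1 c3 v w = v * (2 * w - (v + Ci * c3)) * (2 * w - (v - Ci * c3)) / (4 * w).
Proof. unfold param1; field [Ci_sqr]; auto. Qed.

Lemma param2_shift :
  param2 c3 v w + Ci * c3 = (c3 * c3 + v * v - 4 * (w * w)) / (4 * w).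
Proof. unfold param2; field; auto. Qed.

Hypothesis factor_plus_neq0 : 2 * w - (v + Ci * c3) <> 0.
Hypothesis factor_minus_neq0 : 2 * w - (v - Ci * c3) <> 0.
Hypothesis shift_neq0 : c3 * c3 + v * v - 4 * (w * w) <> 0.

Lemma alpha_pullback :
  alpha_coef c3 (param1 c3 v w) (param2 c3 v w) * dparam1 c3 v w
  = 2 * PI - 4 * PI / (1 - (v - Ci * c3) / 2 / w).
Proof.
  unfold alpha_coef; rewrite param2_shift, param1_factor; unfold dparam1.
  field [Ci_sqr]; repeat split; auto.
Qed.

Lemma omega2_pullback :
  omega2_coef c3 (param1 c3 v w) (param2 c3 v w) * dparam1 c3 v w
  = 2 * PI * Ci * (- (v * v) * w - v * v * (c3 * c3 + v * v) / 4 / w)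
    + 2 * PI * Ci * (v * v * v).
Proof.
  unfold omega2_coef; rewrite param2_shift; unfold dparam1, param1.
  field [Ci_sqr]; repeat split; auto.
Qed.

End ConicParametrization.

(* The principal square root; only meaningful on the half plane [0 < Re z]. *)
Definition csqrt (z : C) : C :=
  (sqrt ((Cmod z + Re z) / 2), Im z / (2 * sqrt ((Cmod z + Re z) / 2)))%R.

Lemma Cmod_add_Re_pos (z : C) : (0 < Re z)%R -> (0 < Cmod z + Re z)%R.
Proof. intros Hz; pose proof (re_le_Cmod z); pose proof (Rle_abs (Re z)); lra. Qed.

Lemma csqrt_sqr (z : C) : (0 < Re z)%R -> csqrt z * csqrt z = z.
Proof.
  intros Hz; pose proof (Cmod_add_Re_pos z Hz) as Hm.
  pose proof (Cmod2_alt z) as Hm2.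
  assert (Ha : (sqrt ((Cmod z + Re z) / 2) * sqrt ((Cmod z + Re z) / 2)
                = (Cmod z + Re z) / 2)%R) by (apply sqrt_sqrt; lra).
  assert (Ha0 : (0 < sqrt ((Cmod z + Re z) / 2))%R) by (apply sqrt_lt_R0; lra).
  unfold csqrt; set (a := sqrt _) in *; set (m := Cmod z) in *.
  destruct z as [x y]; unfold Re, Im in *; cbn [fst snd] in *.
  apply injective_projections; simpl; [|field; lra].
  replace (a * a - y / (2 * a) * (y / (2 * a)))%R with (a * a - y * y / (4 * (a * a)))%R
    by (field; lra).
  rewrite Ha; field_simplify; [|lra].
  rewrite Hm2; field; lra.
Qed.

Lemma csqrt_neq0 (z : C) : (0 < Re z)%R -> csqrt z <> 0.
Proof.
  intros Hz H0; pose proof (Cmod_add_Re_pos z Hz).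
  assert (Ha0 : (0 < sqrt ((Cmod z + Re z) / 2))%R) by (apply sqrt_lt_R0; lra).
  apply (f_equal fst) in H0; simpl in H0; lra.
Qed.

Lemma continuous_csqrt {U : UniformSpace} (f : U -> C) x :
  continuous f x -> (0 < Re (f x))%R -> continuous (fun y => csqrt (f y)) x.
Proof.
  intros Hf Hfx; pose proof (Cmod_add_Re_pos _ Hfx).
  assert (Ha : continuous (fun y => sqrt ((Cmod (f y) + Re (f y)) / 2)) x).
  { apply (continuous_comp _ sqrt); [|apply continuous_sqrt].
    unfold Rdiv; apply continuous_Rmult; [apply continuous_Rplus|apply continuous_const];
      unfold Re; auto using continuous_Cmod, continuous_fst_comp. }
  assert (Ha0 : (0 < sqrt ((Cmod (f x) + Re (f x)) / 2))%R) by (apply sqrt_lt_R0; lra).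
  unfold csqrt; apply continuous_Cpair; auto.
  unfold Rdiv; apply continuous_Rmult; [apply continuous_snd_comp; auto|].
  apply (continuous_comp _ Rinv); [|apply continuous_Rinv; lra].
  apply continuous_Rmult; auto using continuous_const.
Qed.

Definition loop4 (s : R) : C := cis (2 * PI * s) / 2.
Definition radicand (s : R) (c4 : C) : C := 1 + 2 * (c4 - 1 / 2) * cis (- (2 * PI * s)).

(* The continuation of v = (2 c4)^{-1/2} along the translated loop: only the factor
   e^{-i pi s} winds, the principal root stays on its half plane (Re_radicand_gt). *)
Definition branch (s : R) (c4 : C) : C := cis (- (PI * s)) / csqrt (radicand s c4).

Lemma radicand_eq s c4 :
  radicand s c4 = 2 * (loop4 s + (c4 - 1 / 2)) * cis (- (2 * PI * s)).
Proof. unfold radicand, loop4; rewrite cis_opp; field; apply cis_neq0. Qed.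

Lemma branch_monodromy c4 : branch 1 c4 = - branch 0 c4.
Proof.
  unfold branch, radicand.
  rewrite !Rmult_1_r, !Rmult_0_r, !Ropp_0, !cis_opp, cis_2PI, cis_PI, cis_0.
  replace (/ 1) with (RtoC 1) by (apply injective_projections; simpl; field).
  replace (/ -1) with (RtoC (-1)) by (apply injective_projections; simpl; field).
  unfold Cdiv; apply injective_projections; simpl; ring.
Qed.

Section BranchEstimates.

Variables (s : R) (c4 : C).
Hypothesis c4_near : (Cmod (c4 - 1 / 2) < 1 / 10)%R.

Lemma Re_radicand_gt : (4 / 5 < Re (radicand s c4))%R.
Proof.
  unfold radicand; rewrite re_plus.
  set (d := 2 * (c4 - 1 / 2) * cis (- (2 * PI * s))).
  assert (Hd : (Cmod d < 1 / 5)%R) by (unfold d; rewrite !Cmod_mult, Cmod_cis, Cmod_2; lra).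
  pose proof (re_le_Cmod d) as Hre.
  assert (Hre' : (Rabs (Re d) < 1 / 5)%R) by lra; apply Rabs_def2 in Hre'.
  rewrite re_RtoC; lra.
Qed.

Lemma radicand_neq0 : radicand s c4 <> 0.
Proof. intros H; pose proof Re_radicand_gt as Hr; rewrite H in Hr; simpl in Hr; lra. Qed.

Lemma csqrt_radicand_neq0 : csqrt (radicand s c4) <> 0.
Proof. apply csqrt_neq0; pose proof Re_radicand_gt; lra. Qed.

Lemma branch_neq0 : branch s c4 <> 0.
Proof. apply Cdiv_neq0; [apply cis_neq0|apply csqrt_radicand_neq0]. Qed.

Lemma branch_sqr : 2 * (loop4 s + (c4 - 1 / 2)) * (branch s c4 * branch s c4) = 1.
Proof.
  pose proof radicand_neq0 as Hr; rewrite radicand_eq in Hr.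
  unfold branch.
  replace (cis (- (PI * s)) / csqrt (radicand s c4) * (cis (- (PI * s)) / csqrt (radicand s c4)))
    with (cis (- (PI * s)) * cis (- (PI * s)) / (csqrt (radicand s c4) * csqrt (radicand s c4)))
    by (field; apply csqrt_radicand_neq0).
  rewrite csqrt_sqr, cis_add, radicand_eq by (pose proof Re_radicand_gt; lra).
  replace (- (PI * s) + - (PI * s))%R with (- (2 * PI * s))%R by ring.
  set (r := 2 * (loop4 s + (c4 - 1 / 2))) in *.
  assert (r <> 0) by (intros H0; apply Hr; rewrite H0; ring).
  field; split; auto using cis_neq0.
Qed.

Lemma Cmod_branch_lt : (Cmod (branch s c4) < 6 / 5)%R.
Proof.
  pose proof Re_radicand_gt as Hr; pose proof (re_le_Cmod (radicand s c4)) as Hm.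
  pose proof (Rle_abs (Re (radicand s c4))).
  set (q := csqrt (radicand s c4)).
  assert (Hq : (Cmod q * Cmod q = Cmod (radicand s c4))%R).
  { rewrite <- Cmod_mult; unfold q; rewrite csqrt_sqr; lra. }
  pose proof (Cmod_ge_0 q).
  assert (Hq56 : (5 / 6 < Cmod q)%R) by nra.
  unfold branch; rewrite Cmod_div, Cmod_cis by apply csqrt_radicand_neq0.
  fold q; apply (Rmult_lt_reg_r (Cmod q)); [lra|].
  unfold Rdiv; rewrite Rmult_1_l, Rinv_l; lra.
Qed.

End BranchEstimates.

Lemma continuous_branch {U : UniformSpace} (fs : U -> R) (fc4 : U -> C) x :
  continuous fs x -> continuous fc4 x -> (Cmod (fc4 x - 1 / 2) < 1 / 10)%R ->
  continuous (fun y => branch (fs y) (fc4 y)) x.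
Proof.
  intros Hs Hc4 Hnear; unfold branch.
  apply continuous_Cdiv; [solve_continuous| |exact (csqrt_radicand_neq0 (fs x) _ Hnear)].
  apply continuous_csqrt; [|pose proof (Re_radicand_gt (fs x) _ Hnear); lra].
  unfold radicand; solve_continuous.
Qed.

Definition cycle1 (s : R) (c3 c4 : C) (t : R) : C := param1 c3 (branch s c4) (cis (2 * PI * t)).
Definition cycle2 (s : R) (c3 c4 : C) (t : R) : C := param2 c3 (branch s c4) (cis (2 * PI * t)).

Section Cycle.

Variables (s : R) (c3 c4 : C).
Hypothesis c3_small : (Cmod c3 < 1 / 10)%R.
Hypothesis c4_near : (Cmod (c4 - 1 / 2) < 1 / 10)%R.

Let v := branch s c4.

Lemma Cmod_branch_pm_Ci_lt : (Cmod (v + Ci * c3) < 2)%R /\ (Cmod (v - Ci * c3) < 2)%R.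
Proof.
  pose proof (Cmod_branch_lt s c4 c4_near) as Hv; fold v in Hv.
  assert (Hi : Cmod Ci = 1%R) by exact Cmod_Ci.
  pose proof (Cmod_triangle v (Ci * c3)); pose proof (Cmod_triangle v (- (Ci * c3))).
  rewrite Cmod_opp, Cmod_mult, Hi in *; unfold Cminus; lra.
Qed.

Lemma Cmod_conic_constant_lt : (Cmod (c3 * c3 + v * v) < 4)%R.
Proof.
  pose proof (Cmod_branch_lt s c4 c4_near) as Hv; fold v in Hv.
  pose proof (Cmod_ge_0 c3); pose proof (Cmod_ge_0 v).
  pose proof (Cmod_triangle (c3 * c3) (v * v)); rewrite !Cmod_mult in *; nra.
Qed.

Section OnCircle.

Variable w : C.
Hypothesis Cmod_w : Cmod w = 1%R.

Lemma circle_factor_plus_neq0 : 2 * w - (v + Ci * c3) <> 0.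
Proof.
  apply Cminus_eq_contra, Cneq_of_Cmod_lt; rewrite Cmod_mult, Cmod_w, Cmod_2.
  pose proof Cmod_branch_pm_Ci_lt; lra.
Qed.

Lemma circle_factor_minus_neq0 : 2 * w - (v - Ci * c3) <> 0.
Proof.
  apply Cminus_eq_contra, Cneq_of_Cmod_lt; rewrite Cmod_mult, Cmod_w, Cmod_2.
  pose proof Cmod_branch_pm_Ci_lt; lra.
Qed.

Lemma circle_shift_neq0 : c3 * c3 + v * v - 4 * (w * w) <> 0.
Proof.
  apply Cminus_eq_contra, not_eq_sym, Cneq_of_Cmod_lt.
  rewrite !Cmod_mult, Cmod_w, Cmod_R, Rabs_right by lra.
  pose proof Cmod_conic_constant_lt; lra.
Qed.

End OnCircle.

Lemma cycle_in_Rc (t : R) :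
  in_Rc c3 (loop4 s + (c4 - 1 / 2)) (cycle1 s c3 c4 t) (cycle2 s c3 c4 t).
Proof.
  pose proof (cis_neq0 (2 * PI * t)) as Hw; pose proof (Cmod_cis (2 * PI * t)) as Hw1.
  pose proof (branch_neq0 s c4 c4_near) as Hv; fold v in Hv.
  assert (Hc1 : cycle1 s c3 c4 t <> 0).
  { unfold cycle1; fold v; rewrite param1_factor by auto.
    apply Cdiv_neq0; [apply Cmult_neq_0; [apply Cmult_neq_0|]|apply Cmult_neq_0];
      auto using circle_factor_plus_neq0, circle_factor_minus_neq0.
    intros H; injection H; lra. }
  split; [|split; intros [H _]; auto].
  apply param_on_conic; auto using branch_sqr.
Qed.

Lemma is_derive_cycle1 (t : R) :
  is_derive (cycle1 s c3 c4) t (dparam1 c3 v (cis (2 * PI * t))).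
Proof.
  set (K := c3 * c3 + v * v).
  replace (dparam1 c3 v (cis (2 * PI * t)))
    with (2 * PI * Ci * (v * cis (2 * PI * t) - v * K / 4 * cis (- (2 * PI * t))))
    by (unfold dparam1; rewrite cis_opp; fold K; field; apply cis_neq0).
  eapply is_derive_ext; [|apply (is_derive_laurent v (v * K / 4) (- (v * v)))].
  intros u; unfold cycle1, param1; fold v K; rewrite cis_opp; reflexivity.
Qed.

Lemma period_alpha_cycle :
  line_integral (alpha_coef c3) (cycle1 s c3 c4) (cycle2 s c3 c4) (RtoC (-2 * PI)).
Proof.
  exists (fun t => dparam1 c3 v (cis (2 * PI * t))); split; [apply is_derive_cycle1|].
  assert (Hb : (Cmod ((v - Ci * c3) / 2) < 1)%R).
  { rewrite Cmod_div, Cmod_2 by (intros H; injection H; lra).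
    pose proof Cmod_branch_pm_Ci_lt; lra. }
  eapply is_RInt_ext; [|apply (is_RInt_alpha_pullback _ Hb)].
  intros t _; pose proof (Cmod_cis (2 * PI * t)) as Hw.
  pose proof (branch_neq0 s c4 c4_near) as Hv; fold v in Hv.
  unfold cycle1, cycle2; fold v.
  rewrite alpha_pullback; auto using cis_neq0, circle_factor_plus_neq0,
    circle_factor_minus_neq0, circle_shift_neq0.
  rewrite cis_opp; reflexivity.
Qed.

Lemma period_omega2_cycle :
  line_integral (omega2_coef c3) (cycle1 s c3 c4) (cycle2 s c3 c4) (2 * PI * Ci * (v * v * v)).
Proof.
  exists (fun t => dparam1 c3 v (cis (2 * PI * t))); split; [apply is_derive_cycle1|].
  eapply is_RInt_ext; [|apply (is_RInt_laurent_derivative_plus_const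
                                 (- (v * v)) (v * v * (c3 * c3 + v * v) / 4))].
  intros t _; pose proof (Cmod_cis (2 * PI * t)) as Hw.
  pose proof (branch_neq0 s c4 c4_near) as Hv; fold v in Hv.
  unfold cycle1, cycle2; fold v.
  rewrite omega2_pullback; auto using cis_neq0, circle_factor_plus_neq0,
    circle_factor_minus_neq0, circle_shift_neq0.
  rewrite cis_opp; reflexivity.
Qed.

End Cycle.

Section CycleContinuity.

Context {U : UniformSpace} (fs : U -> R) (fc3 fc4 : U -> C) (ft : U -> R) (x : U).
Hypotheses (Hs : continuous fs x) (Hc3 : continuous fc3 x) (Hc4 : continuous fc4 x)
  (Ht : continuous ft x).
Hypothesis c4_near : (Cmod (fc4 x - 1 / 2) < 1 / 10)%R.

Lemma continuous_cycle1 : continuous (fun y => cycle1 (fs y) (fc3 y) (fc4 y) (ft y)) x.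
Proof.
  unfold cycle1, param1; solve_continuous; try apply continuous_branch; auto using cis_neq0.
  intros H; injection H; lra.
Qed.

Lemma continuous_cycle2 : continuous (fun y => cycle2 (fs y) (fc3 y) (fc4 y) (ft y)) x.
Proof.
  unfold cycle2, param2; solve_continuous; try apply continuous_branch; auto using cis_neq0.
  intros H; injection H; lra.
Qed.

End CycleContinuity.

Lemma loop4_shift_neq0 (s : R) (c4 : C) : (Cmod (c4 - 1 / 2) < 1 / 10)%R ->
  loop4 s + (c4 - 1 / 2) <> 0.
Proof.
  intros Hc4 H; pose proof (branch_sqr s c4 Hc4) as Hsq.
  rewrite H, Cmult_0_r, Cmult_0_l in Hsq; injection Hsq; lra.
Qed.

Theorem theorem3 :
  exists (c30 c40 : C) (G3 G4 : R -> C) (eps : R),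
    (0 < eps)%R /\
    (* Gamma = (G3, G4) : [0,1] -> C^2 is a continuous loop based at (c30, c40) *)
    (forall s : R, (0 <= s <= 1)%R -> continuous G3 s /\ continuous G4 s) /\
    G3 0%R = c30 /\ G4 0%R = c40 /\ G3 1%R = c30 /\ G4 1%R = c40 /\
    (* the loop (and its translates to nearby base points c) avoids {c4 = 0} *)
    (forall (s : R) (c3 c4 : C), (0 <= s <= 1)%R ->
        (Cmod (c3 - c30) < eps)%R -> (Cmod (c4 - c40) < eps)%R ->
        G4 s + (c4 - c40) <> RtoC 0) /\
    (* a family of closed curves gamma_{s,c} on R_{Gamma_c(s)},
       Gamma_c(s) = Gamma(s) + (c - c0), depending continuously on (s, c, t) *)
    exists H1 H2 : R -> C -> C -> R -> C,
      (forall (s : R) (c3 c4 : C) (t : R), (0 <= s <= 1)%R ->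
         (Cmod (c3 - c30) < eps)%R -> (Cmod (c4 - c40) < eps)%R ->
         continuous (fun x : R * C * C * R => H1 (fst (fst (fst x))) (snd (fst (fst x)))
                                                 (snd (fst x)) (snd x)) (s, c3, c4, t) /\
         continuous (fun x : R * C * C * R => H2 (fst (fst (fst x))) (snd (fst (fst x)))
                                                 (snd (fst x)) (snd x)) (s, c3, c4, t)) /\
      (forall (s : R) (c3 c4 : C) (t : R), (0 <= s <= 1)%R -> (0 <= t <= 1)%R ->
         (Cmod (c3 - c30) < eps)%R -> (Cmod (c4 - c40) < eps)%R ->
         in_Rc (G3 s + (c3 - c30)) (G4 s + (c4 - c40)) (H1 s c3 c4 t) (H2 s c3 c4 t)) /\
      (forall (s : R) (c3 c4 : C), (0 <= s <= 1)%R ->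
         (Cmod (c3 - c30) < eps)%R -> (Cmod (c4 - c40) < eps)%R ->
         H1 s c3 c4 0%R = H1 s c3 c4 1%R /\ H2 s c3 c4 0%R = H2 s c3 c4 1%R) /\
      (* periods before (s = 0) and after (s = 1) one circuit of Gamma,
         as functions of c near c0 *)
      (forall c3 c4 : C,
         (Cmod (c3 - c30) < eps)%R -> (Cmod (c4 - c40) < eps)%R ->
         exists P0 P1 Q0 Q1 : C,
           line_integral (alpha_coef c3) (H1 0%R c3 c4) (H2 0%R c3 c4) P0 /\
           line_integral (alpha_coef c3) (H1 1%R c3 c4) (H2 1%R c3 c4) P1 /\
           line_integral (omega2_coef c3) (H1 0%R c3 c4) (H2 0%R c3 c4) Q0 /\
           line_integral (omega2_coef c3) (H1 1%R c3 c4) (H2 1%R c3 c4) Q1 /\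
           P1 = - (4 * RtoC PI) - P0 /\
           Q1 = - Q0).
Proof.
  exists (RtoC 0), (1 / 2), (fun _ => RtoC 0), loop4, (1 / 10)%R.
  assert (Hsub0 : forall c3, c3 - RtoC 0 = c3) by (intros; ring).
  split; [lra|]. split.
  { intros s _; split; [apply continuous_const|].
    unfold loop4; solve_continuous; intros H; injection H; lra. }
  split; [reflexivity|]. split; [unfold loop4; rewrite Rmult_0_r, cis_0; reflexivity|].
  split; [reflexivity|]. split; [unfold loop4; rewrite Rmult_1_r, cis_2PI; reflexivity|].
  split; [intros s c3 c4 _ _; apply loop4_shift_neq0|].
  exists cycle1, cycle2.
  split.
  { intros s c3 c4 t _ _ Hc4; split; [apply continuous_cycle1|apply continuous_cycle2]; auto;
      repeat first [apply continuous_fst_comp | apply continuous_snd_comp | apply continuous_id]. }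
  split.
  { intros s c3 c4 t _ _ H3 H4; rewrite Hsub0 in *; rewrite Cplus_0_l.
    apply cycle_in_Rc; auto. }
  split.
  { intros s c3 c4 _ _ _; unfold cycle1, cycle2.
    rewrite Rmult_0_r, Rmult_1_r, cis_0, cis_2PI; split; reflexivity. }
  intros c3 c4 H3 H4; rewrite Hsub0 in H3.
  exists (RtoC (-2 * PI)), (RtoC (-2 * PI)),
    (2 * PI * Ci * (branch 0 c4 * branch 0 c4 * branch 0 c4)),
    (2 * PI * Ci * (branch 1 c4 * branch 1 c4 * branch 1 c4)).
  repeat split; auto using period_alpha_cycle, period_omega2_cycle.
  - apply injective_projections; simpl; ring.
  - rewrite branch_monodromy; ring.
Qed.
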